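(* Let $\mathcal{Q}$ be a quantum query algorithm making $p(n)$ queries to an oracle acting on an $n$-qubit query register, and fix an initial state. For an $n$-qubit pure state $|\psi\rangle$, let $|\Phi^f_\psi\rangle$ be the final state (before measurement) of $\mathcal{Q}$ run from this initial state with oracle $U_\psi=\mathbb{1}-2|\psi\rangle\langle\psi|$. Then there exists a subspace $S$ of the $n$-qubit Hilbert space of dimension $2^{n/2}$ containing $|\psi\rangle$ such that, if $|\Phi^f_S\rangle$ is the final state of $\mathcal{Q}$ run from the same initial state with oracle $U_S=\mathbb{1}-2\Pi_S$ ($\Pi_S$ the orthogonal projector onto $S$), then $\big\||\Phi^f_\psi\rangle-|\Phi^f_S\rangle\big\|_2\le 2p(n)\cdot2^{-n/6}$.
   Context: A quantum query algorithm alternates fixed unitaries on its registers with applications of the oracle to a designated $n$-qubit query register (tensored with identity elsewhere). $n$ is assumed even. *)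

From HB Require Import structures.
From mathcomp Require Import all_boot all_order all_algebra.
From mathcomp Require Import reals.
From mathcomp.real_closed Require Import complex mxtens.
Set Implicit Arguments.
Unset Strict Implicit.
Unset Printing Implicit Defensive.
Import Order.TTheory GRing.Theory Num.Theory Num.Def.
Local Open Scope ring_scope.

(* Conventions: states are ROW vectors 'rV[C]_d; an operator M acts on a
   state v as  v *m M  (so the fixed unitaries range over all unitaries,
   transposition being irrelevant). *)

Definition l2norm (C : numClosedFieldType) d (v : 'rV[C]_d) : C :=
  sqrtC (\sum_i `|v 0 i| ^+ 2).

(* |psi><psi| in the row-vector convention: v *m rank1proj psi = <psi|v> psi. *)
Definition rank1proj (C : numClosedFieldType) d (psi : 'rV[C]_d) : 'M[C]_d :=
  (map_mx conjC psi^T) *m psi.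

Definition oracle_state (C : numClosedFieldType) d (psi : 'rV[C]_d) : 'M[C]_d :=
  1%:M - 2%:R *: rank1proj psi.

Definition oracle_subspace (C : numClosedFieldType) k d (S : 'M[C]_(k, d)) : 'M[C]_d :=
  1%:M - 2%:R *: proj_ortho S.

(* A quantum query algorithm on the space C^(2^n) (query register) (x) C^W
   (remaining registers), given by fixed unitaries U 0, U 1, ..., U q.                        *)
Fixpoint run_alg (C : numClosedFieldType) (N W : nat)
    (U : nat -> 'M[C]_(N * W)) (O : 'M[C]_N) (phi0 : 'rV[C]_(N * W)) (k : nat)
    : 'rV[C]_(N * W) :=
  match k with
  | 0 => phi0 *m U 0
  | k'.+1 => run_alg U O phi0 k' *m (O *t (1%:M : 'M[C]_W)) *m U k
  end.

Definition final_state (C : numClosedFieldType) (N W : nat)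
    (U : nat -> 'M[C]_(N * W)) (q : nat) (O : 'M[C]_N) (phi0 : 'rV[C]_(N * W))
    : 'rV[C]_(N * W) := run_alg U O phi0 q.

(* Complete psi to an orthonormal basis q_0 = psi, q_1, ..., q_(N-1) of the
   query space (N = 2^n).  The weight of q_i at a query is the squared norm of
   the component of the current state along q_i (x) C^W; over the p queries
   these weights add up to p, so some m = 2^(n/2) - 1 vectors q_i other than
   psi carry total weight at most m p / (N - 1).  Let S be spanned by psi and
   these q_i.  Then U_psi - U_S is twice the projector onto the chosen q_i,
   and the hybrid argument bounds the distance of the final states by
   2 p sqrt(m p / (N - 1)) <= 2 p sqrt(p 2^(-n/2)), which is at most
   2 p 2^(-n/6) as soon as p <= 2^(n/6); otherwise the trivial bound 2 is
   already below 2 p 2^(-n/6). *)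

From HB Require Import structures.
From mathcomp Require Import all_boot all_order all_algebra.
From mathcomp Require Import reals.
From mathcomp.real_closed Require Import complex mxtens.
From mathcomp Require Import ring zify.
Import Order.TTheory GRing.Theory Num.Theory Num.Def.
Set Implicit Arguments.
Unset Strict Implicit.
Unset Printing Implicit Defensive.
Local Open Scope ring_scope.
Local Open Scope sesquilinear_scope.
Local Notation "''[' u ]" := (dotmx u u) : ring_scope.
Local Notation "B ^!" :=
  (orthomx conjC (mx_of_hermitian (hermitian1mx _)) B) : matrix_set_scope.

Definition indicator (R : pzSemiRingType) N (b : pred 'I_N) : 'rV[R]_N :=
  \row_i (b i)%:R.

Lemma rank_diag_indicator (F : fieldType) N (b : pred 'I_N) :
  \rank (diag_mx (indicator F b)) = #|b|.
Proof.
have row_diag i : row i (diag_mx (indicator F b)) = (b i)%:R *: delta_mx 0 i.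
  by rewrite row_diag_mx mxE.
have /mxdirectP /= rank_sum := @mxdirect_delta F _ b N id (in2W (@inj_id _)).
have -> : (diag_mx (indicator F b) :=: \sum_(i | b i) <<delta_mx 0 i : 'rV[F]_N>>)%MS.
  apply/eqmxP/andP; split.
    apply/row_subP => i; rewrite row_diag; case: (boolP (b i)) => bi.
      by rewrite scale1r (sumsmx_sup i) ?genmxE.
    by rewrite scale0r sub0mx.
  apply/sumsmx_subP => i bi; rewrite genmxE.
  by have := row_sub i (diag_mx (indicator F b)); rewrite row_diag bi scale1r.
rewrite rank_sum -sum1_card; apply: eq_bigr => i _.
by rewrite mxrank_gen mxrank_delta.
Qed.

Lemma tensmx11 (R : comPzRingType) m n :
  (1%:M : 'M[R]_m) *t (1%:M : 'M[R]_n) = 1%:M.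
Proof.
apply/matrixP => i j.
case: (mxtens_indexP i) => i1 i2; case: (mxtens_indexP j) => j1 j2.
rewrite tensmxE !mxE (inj_eq (can_inj (@mxtens_indexK _ _))) xpair_eqE.
by case: (i1 == j1); case: (i2 == j2); rewrite ?mulr1 ?mulr0 ?mul0r.
Qed.

Lemma tensmxBl (R : comPzRingType) m n p q (A B : 'M[R]_(m, n)) (M : 'M[R]_(p, q)) :
  (A - B) *t M = A *t M - B *t M.
Proof. by apply/matrixP => i j; rewrite !mxE mulrBl. Qed.

Lemma tensmxZl (R : comPzRingType) m n p q c (A : 'M[R]_(m, n)) (M : 'M[R]_(p, q)) :
  (c *: A) *t M = c *: (A *t M).
Proof. by apply/matrixP => i j; rewrite !mxE mulrA. Qed.

Lemma tensmx1_mul (R : comPzRingType) m n k w (A : 'M[R]_(m, n)) (B : 'M[R]_(n, k)) :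
  (A *m B) *t (1%:M : 'M[R]_w) = (A *t 1%:M) *m (B *t 1%:M).
Proof. by rewrite tensmx_mul mulmx1. Qed.

Section DotNorm.
Variable C : numClosedFieldType.

Lemma dotmx_sum d (v : 'rV[C]_d) : '[v] = \sum_i `|v 0 i| ^+ 2.
Proof. by rewrite dotmxE mxE; apply: eq_bigr => i _; rewrite !mxE normCK. Qed.

Lemma l2normE d (v : 'rV[C]_d) : l2norm v = sqrtC '[v].
Proof. by rewrite /l2norm dotmx_sum. Qed.

Lemma l2norm1_dnorm d (v : 'rV[C]_d) : l2norm v = 1 -> '[v] = 1.
Proof. by rewrite l2normE => v1; rewrite -(sqrtCK '[v]) v1 expr1n. Qed.

Lemma dnorm_unitary m k (v : 'rV[C]_m) (M : 'M[C]_(m, k)) :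
  M \is unitarymx -> '[v *m M] = '[v].
Proof.
move=> /unitarymxP MMt; rewrite !dotmxE trmx_mul map_mxM mulmxA.
by rewrite -(mulmxA v) MMt mulmx1.
Qed.

Lemma sqrt_dnormD d (u v : 'rV[C]_d) :
  sqrtC '[u + v] <= sqrtC '[u] + sqrtC '[v].
Proof. exact: (triangle_lerif (@dotmx C d) u v).1. Qed.

Lemma tensmx1_unitary m n w (A : 'M[C]_(m, n)) :
  A \is unitarymx -> A *t (1%:M : 'M[C]_w) \is unitarymx.
Proof.
move=> /unitarymxP AAt; apply/unitarymxP.
by rewrite trmx_tens map_mxT tensmx_mul AAt trmx1 map_mx1 mulmx1 tensmx11.
Qed.

Lemma exists_unitary_row N (psi : 'rV[C]_N) : '[psi] = 1 ->
  exists (Q : 'M[C]_N) (i0 : 'I_N), Q \is unitarymx /\ row i0 Q = psi.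
Proof.
move=> psi1.
have psi0 : psi != 0.
  apply/eqP => psi_eq0; move/eqP: psi1.
  by rewrite psi_eq0 dotmxE mul0mx mxE eq_sym oner_eq0.
set B := schmidt (row_base psi^!%MS).
have Bu : B \is unitarymx by apply: schmidt_unitarymx; exact: rank_leq_col.
have B_psi : B *m psi^t* = 0.
  apply/orthomx1P; rewrite /B (eqmx_schmidt_free (row_base_free _)) eq_row_base.
  by rewrite orthomx_sym; exact: ortho_mx_ortho.
have rankB : (1 + \rank psi^!%MS = N)%N.
  by rewrite -[RHS](add_rank_ortho psi) rank_rV psi0.
have Mu : col_mx psi B \is unitarymx.
  apply/unitarymxP; rewrite tr_col_mx map_row_mx mul_col_row (unitarymxP Bu) B_psi.
  have -> : psi *m B^t* = 0.
    by rewrite -[psi *m _]trmxCK trmx_mul map_mxM !trmxCK B_psi trmx0 map_mx0.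
  have -> : psi *m psi^t* = 1%:M by rewrite [LHS]mx11_scalar -dotmxE psi1.
  by rewrite -scalar_mx_block.
have row0 : row (lshift (\rank psi^!%MS) (0 : 'I_1)) (col_mx psi B) = psi.
  by rewrite rowKu row_id.
move: (col_mx psi B) (lshift _ _) Mu row0; rewrite rankB => M i Mu rowi.
by exists M, i.
Qed.

Lemma reflection_unitary n (P : 'M[C]_n) :
  P^t* = P -> P *m P = P -> 1%:M - 2%:R *: P \is unitarymx.
Proof.
move=> Padj Pidem; apply/unitarymxP.
have -> : (1%:M - 2%:R *: P)^t* = 1%:M - 2%:R *: P.
  apply/matrixP => i j; rewrite -[in RHS]Padj !mxE rmorphB rmorphM /=.
  by rewrite !rmorph_nat eq_sym.
rewrite mulmxBl !mulmxBr !mul1mx !mulmx1 -scalemxAl -scalemxAr Pidem scalerA.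
by apply/matrixP => i j; rewrite !mxE; ring.
Qed.

End DotNorm.

Section BasisProjection.
Variables (C : numClosedFieldType) (N : nat) (Q : 'M[C]_N).

Definition basis_span (b : pred 'I_N) : 'M[C]_N := diag_mx (indicator C b) *m Q.

Definition basis_proj (b : pred 'I_N) : 'M[C]_N :=
  Q^t* *m diag_mx (indicator C b) *m Q.

Lemma diag_indicator_adj (b : pred 'I_N) :
  (diag_mx (indicator C b))^t* = diag_mx (indicator C b).
Proof.
apply/matrixP => i j; rewrite !mxE eq_sym.
by case: eqP => [->|_]; rewrite ?mulr1n ?mulr0n ?rmorph_nat ?rmorph0.
Qed.

Lemma diag_indicator_idem (b : pred 'I_N) :
  diag_mx (indicator C b) *m diag_mx (indicator C b) = diag_mx (indicator C b).
Proof.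
rewrite mulmx_diag; congr diag_mx; apply/rowP => i; rewrite !mxE.
by case: (b i); rewrite ?mulr1 ?mulr0.
Qed.

Lemma basis_proj_adj b : (basis_proj b)^t* = basis_proj b.
Proof. by rewrite /basis_proj !trmx_mul !map_mxM trmxCK diag_indicator_adj mulmxA. Qed.

Lemma basis_projB (b b' b'' : pred 'I_N) :
  (forall i, (b i)%:R - (b' i)%:R = (b'' i)%:R :> C) ->
  basis_proj b - basis_proj b' = basis_proj b''.
Proof.
move=> bB; rewrite /basis_proj -mulmxBl -mulmxBr; congr (_ *m _ *m _).
apply/matrixP => i j; rewrite !mxE -bB.
by case: eqP => _; rewrite ?mulr1n ?mulr0n ?subr0.
Qed.

Lemma rank1proj_row i0 : rank1proj (row i0 Q) = basis_proj (pred1 i0).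
Proof.
rewrite /basis_proj /rank1proj rowE.
have -> : diag_mx (indicator C (pred1 i0)) = delta_mx i0 (0 : 'I_1) *m delta_mx 0 i0.
  rewrite mul_delta_mx; apply/matrixP => i j; rewrite !mxE /=.
  by case: eqP => [->|]; case: eqP => //= [->|]; rewrite ?eqxx ?mulr1n // eq_sym => /eqP /negPf ->.
have -> : delta_mx i0 (0 : 'I_1) = (delta_mx 0 i0)^t* :> 'M[C]_(N, 1).
  by apply/matrixP => i j; rewrite !mxE andbC rmorph_nat.
by rewrite trmx_mul map_mxM !mulmxA.
Qed.

Lemma row_sub_basis_span (b : pred 'I_N) i0 : b i0 -> (row i0 Q <= basis_span b)%MS.
Proof.
move=> bi0; rewrite /basis_span rowE.
have <- : delta_mx 0 i0 *m diag_mx (indicator C b) = delta_mx 0 i0 :> 'rV_N.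
  rewrite mul_mx_diag; apply/matrixP => i j; rewrite !mxE ord1 eqxx /=.
  by case: eqP => [->|_]; rewrite ?bi0 ?mulr1 ?mul0r.
by rewrite -mulmxA submxMl.
Qed.

Hypothesis Q_unitary : Q \is unitarymx.

Lemma basis_proj_idem b : basis_proj b *m basis_proj b = basis_proj b.
Proof.
rewrite /basis_proj !mulmxA -(mulmxA _ Q) (unitarymxP Q_unitary) mulmx1.
by rewrite -(mulmxA _ (diag_mx _) (diag_mx _)) diag_indicator_idem.
Qed.

Lemma rank_basis_span b : \rank (basis_span b) = #|b|.
Proof.
by rewrite mxrankMfree ?rank_diag_indicator // /row_free mxrank_unitary.
Qed.

Lemma proj_ortho_basis_span b : proj_ortho (basis_span b) = basis_proj b.
Proof.
have sub_span : (basis_proj b <= basis_span b)%MS by rewrite /basis_proj -mulmxA submxMl.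
have sub_ortho : (1%:M - basis_proj b <= (basis_span b)^!)%MS.
  apply/orthomx1P; rewrite trmx_mul map_mxM diag_indicator_adj mulmxBl mul1mx.
  rewrite -!mulmxA (mulmxA Q) (unitarymxP Q_unitary) mul1mx.
  by rewrite diag_indicator_idem subrr.
rewrite -[proj_ortho _]mul1mx -{1}(subrK (basis_proj b) 1%:M) mulmxDl.
by rewrite (proj_ortho_id sub_span) (proj_ortho_0 sub_ortho) add0r.
Qed.

Lemma basis_reflection_unitary b : 1%:M - 2%:R *: basis_proj b \is unitarymx.
Proof. exact: reflection_unitary (basis_proj_adj b) (basis_proj_idem b). Qed.

End BasisProjection.

Section QueryAlgorithm.
Variables (C : numClosedFieldType) (N W p : nat) (U : nat -> 'M[C]_(N * W)).
Hypothesis U_unitary : forall k, (k <= p)%N -> U k \is unitarymx.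
Variable phi0 : 'rV[C]_(N * W).

Local Notation "O (x) 1" := (O *t (1%:M : 'M[C]_W)) (at level 40).

Lemma dnorm_run_alg O : O (x) 1 \is unitarymx ->
  forall t, (t <= p)%N -> '[run_alg U O phi0 t] = '[phi0].
Proof.
move=> O_unitary; elim=> [|t IH] le_tp /=; first by rewrite dnorm_unitary ?U_unitary.
by rewrite !dnorm_unitary ?U_unitary // IH // ltnW.
Qed.

Lemma run_alg_hybrid O1 O2 : O2 (x) 1 \is unitarymx ->
  forall t, (t <= p)%N ->
  sqrtC '[run_alg U O1 phi0 t - run_alg U O2 phi0 t] <=
  \sum_(s < t) sqrtC '[run_alg U O1 phi0 s *m ((O1 - O2) (x) 1)].
Proof.
move=> O2_unitary; elim=> [|t IH] le_tp /=.
  by rewrite subrr big_ord0 dotmxE mul0mx mxE sqrtC0.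
set a := run_alg U O1 phi0 t; set b := run_alg U O2 phi0 t.
have -> : a *m (O1 (x) 1) *m U t.+1 - b *m (O2 (x) 1) *m U t.+1 =
    ((a - b) *m (O2 (x) 1) + a *m ((O1 - O2) (x) 1)) *m U t.+1.
  by rewrite tensmxBl mulmxBr mulmxDl !mulmxBl [RHS]addrC [RHS]addrA subrK.
rewrite dnorm_unitary ?U_unitary // big_ord_recr /=.
apply: le_trans (sqrt_dnormD _ _) _; rewrite lerD2r dnorm_unitary //.
exact: IH (ltnW le_tp).
Qed.

Lemma sqrt_dnorm_run_alg_diff O1 O2 : '[phi0] = 1 ->
  O1 (x) 1 \is unitarymx -> O2 (x) 1 \is unitarymx ->
  sqrtC '[run_alg U O1 phi0 p - run_alg U O2 phi0 p] <= 2.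
Proof.
move=> phi0_1 O1_unitary O2_unitary.
apply: le_trans (sqrt_dnormD _ _) _.
rewrite (hnormN (@dotmx C _)) /=.
by rewrite (dnorm_run_alg O1_unitary) ?(dnorm_run_alg O2_unitary) // phi0_1 sqrtC1.
Qed.

End QueryAlgorithm.

Section QueryWeight.
Variables (C : numClosedFieldType) (N W : nat).

Definition query_weight (c : 'rV[C]_(N * W)) (i : 'I_N) : C :=
  \sum_(w < W) `|c 0 (mxtens_index (i, w))| ^+ 2.

Lemma query_weight_ge0 c i : 0 <= query_weight c i.
Proof. by apply: sumr_ge0 => w _; rewrite exprn_ge0. Qed.

Lemma sum_mxtens_index (F : 'I_(N * W) -> C) :
  \sum_k F k = \sum_(i < N) \sum_(w < W) F (mxtens_index (i, w)).
Proof.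
rewrite pair_big /= (reindex (@mxtens_index N W)) /=; last first.
  by exists (@mxtens_unindex N W) => x _; rewrite ?mxtens_indexK ?mxtens_unindexK.
by apply: eq_bigr => -[i w] _.
Qed.

Lemma dnorm_query_weight c : '[c] = \sum_i query_weight c i.
Proof. by rewrite dotmx_sum sum_mxtens_index. Qed.

Lemma diag_indicator_tens1 (b : pred 'I_N) :
  diag_mx (indicator C b) *t (1%:M : 'M[C]_W) =
  diag_mx (\row_k (b (mxtens_unindex k).1)%:R).
Proof.
apply/matrixP => i j.
case: (mxtens_indexP i) => i1 i2; case: (mxtens_indexP j) => j1 j2.
rewrite tensmxE !mxE (inj_eq (can_inj (@mxtens_indexK _ _))) xpair_eqE mxtens_indexK /=.
by case: (i1 == j1); case: (i2 == j2); rewrite ?mulr1 ?mulr0 ?mul0r ?mulr0n ?mulr1n.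
Qed.

Lemma dnorm_diag_indicator_tens1 c (b : pred 'I_N) :
  '[c *m (diag_mx (indicator C b) *t (1%:M : 'M[C]_W))] =
  \sum_(i < N | b i) query_weight c i.
Proof.
rewrite diag_indicator_tens1 mul_mx_diag dotmx_sum sum_mxtens_index [RHS]big_mkcond.
apply: eq_bigr => i _; rewrite /query_weight; case: (boolP (b i)) => bi.
  by apply: eq_bigr => w _; rewrite !mxE mxtens_indexK bi mulr1.
by apply: big1 => w _; rewrite !mxE mxtens_indexK (negbTE bi) mulr0 normr0 expr0n.
Qed.

End QueryWeight.

(* Discarding a heaviest element never raises the average weight. *)
Lemma exists_light_subset (R : numDomainType) (I : finType) (f : I -> R) m :
  (forall i, 0 <= f i) -> forall A : {set I}, (m <= #|A|)%N ->
  exists J : {set I}, [/\ J \subset A, #|J| = m &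
     #|A|%:R * \sum_(i in J) f i <= m%:R * \sum_(i in A) f i].
Proof.
move=> f_ge0 A; move sizeA: (#|A| - m)%N => k; elim: k A sizeA => [|k IH] A sizeA le_mA.
  have cardA : #|A| = m by apply/eqP; rewrite eqn_leq le_mA andbT -subn_eq0 sizeA.
  by exists A; split => //; rewrite cardA.
have [x xA] : exists x, x \in A.
  by apply/set0Pn; rewrite -card_gt0; move: sizeA; case: #|A| => //=; rewrite sub0n.
have [z zA zmax] : exists2 z, z \in A & forall j, j \in A -> f j <= f z.
  case: (@real_arg_maxP _ _ x (mem A) f xA) => [i _|z zA zmax]; first exact: ger0_real.
  by exists z.
set A' := A :\ z.
have cardA : #|A| = #|A'|.+1 by rewrite (cardsD1 z A) zA.
have sizeA' : (#|A'| - m)%N = k by move: sizeA; rewrite cardA; lia.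
have le_mA' : (m <= #|A'|)%N by move: sizeA; rewrite cardA; lia.
have [J [JA' cardJ J_light]] := IH A' sizeA' le_mA'.
exists J; split => //; first exact: subset_trans JA' (subsetDl _ _).
rewrite (bigD1 z zA) /= cardA -addn1 natrD mulrDl mul1r mulrDr.
have -> : \sum_(i in A | i != z) f i = \sum_(i in A') f i.
  by apply: eq_bigl => i; rewrite !inE andbC.
rewrite [X in _ <= X]addrC lerD //.
have -> : m%:R * f z = \sum_(i in J) f z by rewrite sumr_const cardJ mulr_natl.
apply: ler_sum => i iJ; apply: zmax.
by move/subsetP: JA' => /(_ i iJ); rewrite inE => /andP[].
Qed.

Section BasisSubspaceOracle.
Variables (C : numClosedFieldType) (N W p : nat) (U : nat -> 'M[C]_(N * W)).
Hypothesis U_unitary : forall k, (k <= p)%N -> U k \is unitarymx.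
Variables (phi0 : 'rV[C]_(N * W)) (Q : 'M[C]_N) (i0 : 'I_N).
Hypotheses (phi0_1 : '[phi0] = 1) (Q_unitary : Q \is unitarymx).

Local Notation "O (x) 1" := (O *t (1%:M : 'M[C]_W)) (at level 40).
Local Notation Opsi := (oracle_state (row i0 Q)).
Local Notation run O := (run_alg U O phi0).

(* The query magnitude of the basis vector [row i Q]; multiplying by
   [Q^t* (x) 1] reads off coordinates in the basis [Q]. *)
Let mass i := \sum_(s < p) query_weight (run Opsi s *m (Q^t* (x) 1)) i.

Lemma oracle_state_row : Opsi = 1%:M - 2%:R *: basis_proj Q (pred1 i0).
Proof. by rewrite /oracle_state rank1proj_row. Qed.

Lemma oracle_basis_span b : oracle_subspace (basis_span Q b) = 1%:M - 2%:R *: basis_proj Q b.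
Proof. by rewrite /oracle_subspace proj_ortho_basis_span. Qed.

Lemma oracle_state_row_unitary : Opsi (x) 1 \is unitarymx.
Proof. by rewrite oracle_state_row tensmx1_unitary ?basis_reflection_unitary. Qed.

Lemma oracle_basis_span_unitary b : oracle_subspace (basis_span Q b) (x) 1 \is unitarymx.
Proof. by rewrite oracle_basis_span tensmx1_unitary ?basis_reflection_unitary. Qed.

Lemma oracle_state_row_gap (J : {set 'I_N}) : i0 \notin J ->
  Opsi - oracle_subspace (basis_span Q [predU1 i0 & J]) = 2%:R *: basis_proj Q (mem J).
Proof.
move=> i0J; rewrite oracle_state_row oracle_basis_span opprB addrC addrA subrK.
rewrite -scalerBr (@basis_projB _ _ Q _ (pred1 i0) (mem J)) // => i /=.
by case: eqP => [->|_] /=; rewrite ?(negbTE i0J) ?subrr ?subr0.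
Qed.

Lemma query_mass_ge0 i : 0 <= mass i.
Proof. by apply: sumr_ge0 => s _; apply: query_weight_ge0. Qed.

Lemma sum_query_mass : \sum_i mass i = p%:R.
Proof.
rewrite exchange_big /=; transitivity (\sum_(s < p) (1 : C)).
  apply: eq_bigr => s _.
  rewrite -dnorm_query_weight dnorm_unitary ?tensmx1_unitary ?trmxC_unitary //.
  by rewrite (dnorm_run_alg U_unitary phi0 oracle_state_row_unitary) // ltnW.
by rewrite sumr_const card_ord.
Qed.

Lemma dnorm_gap_le_mass (J : {set 'I_N}) : i0 \notin J ->
  '[run Opsi p - run (oracle_subspace (basis_span Q [predU1 i0 & J])) p]
    <= 4 * p%:R ^+ 2 * \sum_(i in J) mass i.
Proof.
move=> i0J; set OJ := oracle_subspace _; set Y := \sum_(i in J) mass i.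
have Y_ge0 : 0 <= Y by apply: sumr_ge0 => i _; apply: query_mass_ge0.
have OJ_unitary : OJ (x) 1 \is unitarymx := oracle_basis_span_unitary _.
have weight_sum_ge0 (c : 'rV[C]_(N * W)) (P : pred 'I_N) :
    0 <= \sum_(i < N | P i) query_weight c i.
  by apply: sumr_ge0 => i _; apply: query_weight_ge0.
have query_term (s : 'I_p) : sqrtC '[run Opsi s *m ((Opsi - OJ) (x) 1)] <= 2 * sqrtC Y.
  rewrite oracle_state_row_gap // tensmxZl -scalemxAr dnormZ /= /basis_proj.
  rewrite !tensmx1_mul !mulmxA dnorm_unitary ?tensmx1_unitary //.
  rewrite dnorm_diag_indicator_tens1 normr_nat sqrtCM ?nnegrE ?exprn_ge0 //.
  rewrite sqrCK // ler_wpM2l // ler_sqrtC ?nnegrE //.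
  apply: ler_sum => i _; rewrite /mass (bigD1 s) //= lerDl.
  by apply: sumr_ge0 => s' _; apply: query_weight_ge0.
have sqrt_gap : sqrtC '[run Opsi p - run OJ p] <= 2 * p%:R * sqrtC Y.
  apply: le_trans (run_alg_hybrid U_unitary phi0 Opsi OJ_unitary (leqnn p)) _.
  apply: le_trans (ler_sum _ (fun s _ => query_term s)) _.
  by rewrite sumr_const card_ord -[_ *+ p]mulr_natr mulrAC.
have -> : 4 * p%:R ^+ 2 * Y = (2 * p%:R * sqrtC Y) ^+ 2.
  by rewrite !exprMn sqrtCK; ring.
rewrite -(sqrtCK '[_]) ler_pXn2r ?nnegrE ?mulr_ge0 ?sqrtC_ge0 //.
exact: dnorm_ge0.
Qed.

(* [S] is spanned by [row i0 Q] and the [m] other basis vectors of least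
   query magnitude. *)
Lemma exists_basis_subspace_close m : (m <= N.-1)%N ->
  exists S : 'M[C]_N, [/\ \rank S = m.+1, (row i0 Q <= S)%MS,
    sqrtC '[run Opsi p - run (oracle_subspace S) p] <= 2 &
    (N.-1)%:R * '[run Opsi p - run (oracle_subspace S) p] <= 4 * m%:R * p%:R ^+ 3].
Proof.
move=> le_mN.
have cardC1 : #|[set~ i0]| = N.-1 by rewrite cardsC1 card_ord.
have le_m_cardC1 : (m <= #|[set~ i0]|)%N by rewrite cardC1.
have [J [J_sub cardJ J_light]] := exists_light_subset query_mass_ge0 le_m_cardC1.
have i0J : i0 \notin J by apply/negP => /(subsetP J_sub); rewrite !inE eqxx.
have rest_mass : \sum_(i in [set~ i0]) mass i <= p%:R.
  rewrite -sum_query_mass [X in _ <= X](bigID (mem [set~ i0])) /= lerDl.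
  by apply: sumr_ge0 => i _; apply: query_mass_ge0.
exists (basis_span Q [predU1 i0 & J]); split.
- by rewrite rank_basis_span // cardU1 i0J cardJ.
- exact/row_sub_basis_span/predU1l.
- exact: sqrt_dnorm_run_alg_diff phi0_1 oracle_state_row_unitary
         (oracle_basis_span_unitary _).
apply: le_trans (ler_wpM2l (ler0n _ _) (dnorm_gap_le_mass i0J)) _.
have -> : (N.-1)%:R * (4 * p%:R ^+ 2 * \sum_(i in J) mass i)
          = 4 * p%:R ^+ 2 * ((N.-1)%:R * \sum_(i in J) mass i) by ring.
have -> : 4 * m%:R * p%:R ^+ 3 = 4 * p%:R ^+ 2 * (m%:R * p%:R) :> C by ring.
rewrite ler_wpM2l ?mulr_ge0 ?exprn_ge0 // -cardC1.
by apply: le_trans J_light _; rewrite ler_wpM2l.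
Qed.

End BasisSubspaceOracle.

(* For [x <= p] the trivial bound [2] suffices; otherwise [x ^+ 3 = y] turns
   [D <= 4 p^3 / (y + 1)] into [D <= (2 p / x)^2]. *)
Lemma sqrtC_le_query_bound (C : numClosedFieldType) (x D : C) (y p : nat) :
  0 < x -> x ^+ 3 = y%:R -> (0 < p)%N -> 0 <= D -> sqrtC D <= 2 ->
  ((y ^ 2).-1)%:R * D <= 4 * (y.-1)%:R * p%:R ^+ 3 -> sqrtC D <= 2 * p%:R / x.
Proof.
move=> x_gt0 x3 p_gt0 D_ge0 sqrtD_le2 D_le.
have [le_xp | lt_px] := real_leP (gtr0_real x_gt0) (realn C p).
  apply: le_trans sqrtD_le2 _.
  by rewrite ler_pdivlMr // ler_wpM2l.
have x_gt1 : 1 < x by apply: le_lt_trans lt_px; rewrite ler1n.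
have y_gt1 : (1 < y)%N by rewrite -(ltr1n C) -x3 exprn_egt1.
have Dy : (y.+1)%:R * D <= 4 * p%:R ^+ 3.
  have y21 : ((y ^ 2).-1 = y.-1 * y.+1)%N by rewrite -[(y ^ 2)%N]/(y * y)%N; nia.
  move: D_le; rewrite y21 natrM -mulrA [4 * _]mulrC -mulrA ler_pM2l //.
  by rewrite ltr0n; lia.
have D_sq : D <= (2 * p%:R / x) ^+ 2.
  rewrite expr_div_n ler_pdivlMr ?exprn_gt0 // -(ler_pM2r x_gt0) -mulrA -exprSr x3.
  apply: (@le_trans _ _ ((y.+1)%:R * D)); first by rewrite mulrC ler_wpM2r ?ler_nat.
  have -> : (2 * p%:R) ^+ 2 * x = 4 * p%:R ^+ 2 * x by ring.
  apply: (le_trans Dy); rewrite exprSr mulrA ler_wpM2l ?ltW //.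
  by rewrite mulr_gt0 ?exprn_gt0 ?ltr0n.
have q_ge0 : 0 <= 2 * p%:R / x by rewrite divr_ge0 ?mulr_ge0 ?ler0n // ltW.
by rewrite -(sqrCK q_ge0) ler_sqrtC // nnegrE exprn_ge0.
Qed.

Theorem mainTheorem4 (R : realType) (n W p : nat) (n_even : ~~ odd n)
    (U : nat -> 'M[R[i]]_(2 ^ n * W))
    (U_unitary : forall k, (k <= p)%N -> U k \is unitarymx)
    (phi0 : 'rV[R[i]]_(2 ^ n * W)) (phi0_state : l2norm phi0 = 1)
    (psi : 'rV[R[i]]_(2 ^ n)) (psi_state : l2norm psi = 1) :
  exists S : 'M[R[i]]_(2 ^ n),
    [/\ \rank S = (2 ^ n./2)%N,
        (psi <= S)%MS &
        l2norm (final_state U p (oracle_state psi) phi0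
                - final_state U p (oracle_subspace S) phi0)
          <= 2%:R * p%:R * (6.-root (2%:R ^+ n))^-1 ].
Proof.
have [Q [i0 [Q_unitary Q_i0]]] := exists_unitary_row (l2norm1_dnorm psi_state).
set h := n./2.
have n_double : n = (h + h)%N.
  by rewrite /h addnn -{1}(odd_double_half n) (negbTE n_even) add0n.
have le_m : ((2 ^ h).-1 <= (2 ^ n).-1)%N.
  by rewrite n_double expnD -!subn1 leq_sub2r // leq_pmulr ?expn_gt0.
have [S [rankS psi_S dist_le2 dist_le]] :=
  exists_basis_subspace_close U_unitary i0 (l2norm1_dnorm phi0_state) Q_unitary le_m.
exists S; split; first by rewrite rankS prednK ?expn_gt0.
  by rewrite -Q_i0.
rewrite l2normE /final_state -Q_i0.
have [p0 | p_gt0] := posnP p.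
  by rewrite p0 subrr dotmxE mul0mx mxE sqrtC0 mulr0 mul0r.
apply: (sqrtC_le_query_bound (y := 2 ^ h) _ _ p_gt0 _ dist_le2).
- by rewrite rootC_gt0 // exprn_gt0 // ltr0n.
- apply/eqP; rewrite -(@eqrXn2 _ 2) // ?exprn_ge0 ?rootC_ge0 ?exprn_ge0 ?ler0n //.
  by rewrite -exprM rootCK // natrX -exprM n_double addnn -muln2.
- exact: dnorm_ge0.
- by rewrite -expnM muln2 -addnn -n_double.
Qed.
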